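(* For every finite graph $G$, $\widetilde{\Delta}(G) \leq \alpha^{\ast}(G)^{\widetilde{\omega}(G)}$.
   Context: Two vertices of $G$ are equivalent if they lie in exactly the same maximal cliques of $G$. The clique-quotient graph $\widetilde{G}$ has the equivalence classes as vertices, two distinct classes adjacent iff their representatives are adjacent in $G$; $\widetilde{\Delta}(G)$ is the maximum degree of $\widetilde{G}$. $\widetilde{\omega}(G)$ is the maximum over maximal cliques $K$ of the number of equivalence classes meeting $K$. $\alpha^{\ast}(G)=\max_v\alpha(G[N[v]])$. *)

(* A finite simple graph: vertex type T : finType,
   adjacency e : rel T, symmetric and irreflexive. *)
From mathcomp Require Import all_boot.
Set Implicit Arguments. Unset Strict Implicit. Unset Printing Implicit Defensive.

Section Graph.
Variables (T : finType) (e : rel T).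

Definition clique (K : {set T}) : bool :=
  [forall x in K, forall y in K, (x != y) ==> e x y].

Definition maxclique (K : {set T}) : bool := maxset clique K.

Definition cequiv (u v : T) : bool :=
  [forall K : {set T}, maxclique K ==> ((u \in K) == (v \in K))].

Definition cclass (v : T) : {set T} := [set u | cequiv u v].

(* vertex set of the clique-quotient graph *)
Definition cclasses : {set {set T}} := [set cclass v | v in T].

(* adjacency in the clique-quotient graph: distinct classes with adjacent
   representatives (well defined; we use "some representatives") *)
Definition qadj (C D : {set T}) : bool :=
  (C != D) && [exists u in C, exists w in D, e u w].

Definition Delta_tilde : nat :=
  \max_(C in cclasses) #|[set D in cclasses | qadj C D]|.

Definition omega_tilde : nat :=
  \max_(K : {set T} | maxclique K) #|[set C in cclasses | C :&: K != set0]|.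

Definition stable (I : {set T}) : bool :=
  [forall x in I, forall y in I, ~~ e x y].

Definition alpha_in (S : {set T}) : nat :=
  \max_(I : {set T} | (I \subset S) && stable I) #|I|.

Definition cnbhd (v : T) : {set T} := v |: [set w | e v w].

Definition alpha_star : nat := \max_(v : T) alpha_in (cnbhd v).

End Graph.

From mathcomp Require Import all_boot zify.
Set Implicit Arguments. Unset Strict Implicit. Unset Printing Implicit Defensive.

(* Pick one representative in each class adjacent to the class of a vertex v.
   Equivalent vertices lie in the same maximal cliques, so the representatives
   are neighbours of v, pairwise inequivalent and inequivalent to v. A clique Q
   among them extends, with v, to a maximal clique meeting #|Q| + 1 classes, so
   #|Q| < omega~; a stable set among them lies in N[v], so it has at most
   alpha* vertices. The Erdos-Szekeres bound 'C(alpha* + k, k) for k = omega~ - 1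
   is at most alpha* ^ omega~ when alpha* >= 2. When alpha* <= 1 every closed
   neighbourhood is a clique, hence the only maximal clique through its centre,
   so adjacent vertices are equivalent and the quotient has no edges. *)

Lemma bin_le_expn a k : 1 < a -> 'C(a + k, k) <= a ^ k.+1.
Proof.
move=> a_gt1; elim: k => [|[|k] IHk]; first by rewrite bin0 expn1 ltnW.
  by rewrite addn1 bin1 expnS expn1; nia.
have step : a + k.+2 <= k.+2 * a by nia.
rewrite -(leq_pmul2l (ltn0Sn k.+1)) -mul_bin_diag addnS /= -addnS.
apply: (@leq_trans ((a + k.+2) * a ^ k.+2)); first by rewrite leq_mul2l IHk orbT.
by rewrite (expnS a k.+2) mulnA leq_mul2r step orbT.
Qed.

Section Ramsey.
Variables (T : finType) (e : rel T).
Hypotheses (e_sym : symmetric e) (e_irr : irreflexive e).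

Lemma cliqueP (K : {set T}) :
  reflect {in K &, forall x y, x != y -> e x y} (clique e K).
Proof.
apply: (iffP forallP) => [cK x y xK yK | cK x].
  by move: (cK x); rewrite xK => /forall_inP/(_ y yK)/implyP.
by apply/implyP => xK; apply/forall_inP => y yK; apply/implyP; apply: cK.
Qed.

Lemma stableP (I : {set T}) : reflect {in I &, forall x y, ~~ e x y} (stable e I).
Proof.
apply: (iffP forallP) => [sI x y xI yI | sI x].
  by move: (sI x); rewrite xI => /forall_inP/(_ y yI).
by apply/implyP => xI; apply/forall_inP => y yI; apply: sI.
Qed.

Lemma clique1 x : clique e [set x].
Proof. by apply/cliqueP => y z /set1P -> /set1P ->; rewrite eqxx. Qed.

Lemma stable1 x : stable e [set x].
Proof. by apply/stableP => y z /set1P -> /set1P ->; rewrite e_irr. Qed.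

Lemma clique2 x y : e x y -> clique e [set x; y].
Proof.
move=> exy; apply/cliqueP => a b /set2P [] -> /set2P [] ->;
  by rewrite ?eqxx // e_sym.
Qed.

Lemma cliqueU1 x Q : clique e Q -> {in Q, forall y, e x y} -> clique e (x |: Q).
Proof.
move=> /cliqueP cQ exQ; apply/cliqueP => y z /setU1P [-> | yQ] /setU1P [-> | zQ];
  [by rewrite eqxx | by move=> _; apply: exQ | by rewrite e_sym => _; apply: exQ | exact: cQ].
Qed.

Lemma stableU1 x I : stable e I -> {in I, forall y, ~~ e x y} -> stable e (x |: I).
Proof.
move=> /stableP sI exI; apply/stableP => y z /setU1P [-> | yI] /setU1P [-> | zI];
  [by rewrite e_irr | exact: exI | rewrite e_sym; exact: exI | exact: sI].
Qed.

Lemma ramsey_binomial m k (S : {set T}) :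
  (forall Q : {set T}, Q \subset S -> clique e Q -> #|Q| <= k) ->
  (forall I : {set T}, I \subset S -> stable e I -> #|I| <= m) ->
  #|S| < 'C(m + k, k).
Proof.
elim: m k S => [|m IHm] k S cliqueS stableS.
  have [-> | [x xS]] := set_0Vmem S; first by rewrite cards0 bin_gt0 leq_addl.
  by move: (stableS [set x]); rewrite sub1set xS cards1 stable1 => /(_ isT isT).
elim: k S cliqueS stableS => [|k IHk] S cliqueS stableS;
  have [-> | [x xS]] := set_0Vmem S; rewrite ?cards0 ?bin_gt0 ?leq_addl //.
  by move: (cliqueS [set x]); rewrite sub1set xS cards1 clique1 => /(_ isT isT).
pose N := (S :\ x) :&: [set y | e x y].
pose M := (S :\ x) :\: [set y | e x y].
have cardS : #|S| = (#|N| + #|M|).+1 by rewrite /N /M cardsID (cardsD1 x S) xS.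
have sNS : N \subset S by rewrite /N subIset ?subsetDl.
have sMS : M \subset S by rewrite /M (subset_trans (subsetDl _ _)) ?subsetDl.
have sxS (A : {set T}) : A \subset S -> x |: A \subset S.
  by move=> sAS; rewrite subUset sub1set xS.
have cardN : #|N| < 'C(m.+1 + k, k).
  apply: IHk => [Q sQN cQ | I sIN sI]; last exact: stableS (subset_trans sIN sNS) sI.
  have exQ : {in Q, forall y, e x y} by move=> y /(subsetP sQN); rewrite !inE => /andP [_ ->].
  have xQ : x \notin Q by apply/negP => /exQ; rewrite e_irr.
  by move: (cliqueS _ (sxS _ (subset_trans sQN sNS)) (cliqueU1 cQ exQ)); rewrite cardsU1 xQ.
have cardM : #|M| < 'C(m.+1 + k, k.+1).
  rewrite addSnnS; apply: IHm => [Q sQM cQ | I sIM sI].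
    exact: cliqueS (subset_trans sQM sMS) cQ.
  have exI : {in I, forall y, ~~ e x y} by move=> y /(subsetP sIM); rewrite !inE => /andP [].
  have xI : x \notin I by apply/negP => /(subsetP sIM); rewrite !inE eqxx andbF.
  by move: (stableS _ (sxS _ (subset_trans sIM sMS)) (stableU1 sI exI)); rewrite cardsU1 xI.
by rewrite addnS binS cardS; lia.
Qed.

End Ramsey.

Section CliqueQuotient.
Variables (T : finType) (e : rel T).
Hypotheses (e_sym : symmetric e) (e_irr : irreflexive e).

Lemma cequivP u v :
  reflect (forall K, maxclique e K -> (u \in K) = (v \in K)) (cequiv e u v).
Proof.
apply: (iffP forallP) => [uv K maxK | uv K]; first by move/implyP/(_ maxK)/eqP: (uv K).
by apply/implyP => maxK; rewrite uv.
Qed.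

Lemma cequiv_sym u v : cequiv e u v = cequiv e v u.
Proof. by apply/cequivP/cequivP => uv K maxK; rewrite uv. Qed.

Lemma cequiv_trans v u w : cequiv e u v -> cequiv e v w -> cequiv e u w.
Proof. by move=> /cequivP uv /cequivP vw; apply/cequivP => K maxK; rewrite uv // vw. Qed.

Lemma mem_cclass u v : (u \in cclass e v) = cequiv e u v.
Proof. by rewrite inE. Qed.

Lemma cclass_refl v : v \in cclass e v.
Proof. by rewrite mem_cclass; apply/cequivP. Qed.

Lemma eq_cclass u v : (cclass e u == cclass e v) = cequiv e u v.
Proof.
apply/eqP/idP => [uv | uv]; first by rewrite -mem_cclass -uv cclass_refl.
apply/setP => w; rewrite !mem_cclass.
by apply/idP/idP => wu; apply: cequiv_trans wu _; rewrite // cequiv_sym.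
Qed.

Lemma cequiv_adj u v w x :
  cequiv e u v -> cequiv e w x -> e u w -> v != x -> e v x.
Proof.
move=> /cequivP uv /cequivP wx euw; have [K maxK sK] := maxset_exists (clique2 e_sym euw).
have [/cliqueP cK _] := maxsetP maxK.
by apply: cK; rewrite -?uv -?wx // (subsetP sK) // !inE eqxx ?orbT.
Qed.

Lemma qadj_cclass v x : qadj e (cclass e v) (cclass e x) = ~~ cequiv e v x && e v x.
Proof.
rewrite /qadj eq_cclass; case: (boolP (cequiv e v x)) => //= vx.
apply/exists_inP/idP => [[u uv /exists_inP [w wx euw]] | evx].
  rewrite mem_cclass in uv; rewrite mem_cclass in wx.
  by apply: cequiv_adj uv wx euw (contraNneq _ vx) => ->; rewrite -mem_cclass cclass_refl.
by exists v; rewrite ?cclass_refl //; apply/exists_inP; exists x; rewrite ?cclass_refl.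
Qed.

Lemma cclass_transversal (P : {set {set T}}) : P \subset cclasses e ->
  exists2 W : {set T}, {in W &, injective (cclass e)} & cclass e @: W = P.
Proof.
move=> sP; exists [set x | (cclass e x \in P) && ([pick y in cclass e x] == Some x)].
  move=> x y; rewrite !inE => /andP [_ /eqP px] /andP [_ /eqP py] cxy.
  by move: px; rewrite cxy py => -[].
apply/setP => D; apply/imsetP/idP => [[x] | PD]; first by rewrite inE => /andP [Px _] ->.
have /imsetP [y _ Dy] := subsetP sP D PD; rewrite Dy in PD *.
have [x xy pick_x] : exists2 x, x \in cclass e y & [pick z in cclass e y] = Some x.
  by case: pickP => [x xy | no_y]; [exists x | have := no_y y; rewrite /= cclass_refl].
move: xy; rewrite mem_cclass -eq_cclass => /eqP cxy.
by exists x; rewrite // inE cxy PD pick_x /=.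
Qed.

Lemma card_cclass_clique (Q : {set T}) : clique e Q -> #|cclass e @: Q| <= omega_tilde e.
Proof.
move=> cQ; have [K maxK sQK] := maxset_exists cQ.
apply: leq_trans (leq_bigmax_cond _ maxK); apply/subset_leq_card/subsetP => _ /imsetP [x xQ ->].
rewrite inE imset_f //=; apply/set0Pn; exists x.
by rewrite inE cclass_refl (subsetP sQK).
Qed.

Lemma card_stable_cnbhd v (I : {set T}) :
  I \subset cnbhd e v -> stable e I -> #|I| <= alpha_star e.
Proof.
move=> sIN sI; apply: leq_trans (leq_bigmax v).
by apply: leq_bigmax_cond; rewrite sIN.
Qed.

Lemma cnbhd_clique v : alpha_star e <= 1 -> clique e (cnbhd e v).
Proof.
move=> alpha_le1; apply/cliqueP => x y xN yN xy; apply: contraTT alpha_le1 => exy.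
rewrite -ltnNge; have := @card_stable_cnbhd v [set x; y]; rewrite cards2 xy; apply.
  by rewrite subUset !sub1set xN yN.
by apply/stableP => a b /set2P [] -> /set2P [] ->; rewrite ?e_irr // e_sym.
Qed.

Lemma maxclique_cnbhd x K :
  alpha_star e <= 1 -> maxclique e K -> x \in K -> K = cnbhd e x.
Proof.
move=> alpha_le1 /maxsetP [/cliqueP cK maxK] xK; apply/esym/maxK.
  exact: cnbhd_clique.
apply/subsetP => z zK; rewrite !inE; have [// | zx] := eqVneq z x.
by rewrite cK // eq_sym.
Qed.

Lemma adj_cequiv u v : alpha_star e <= 1 -> e u v -> cequiv e u v.
Proof.
move=> alpha_le1 euv; apply/cequivP => K maxK; apply/idP/idP => [uK | vK].
  by rewrite (maxclique_cnbhd alpha_le1 maxK uK) !inE euv orbT.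
by rewrite (maxclique_cnbhd alpha_le1 maxK vK) !inE e_sym euv orbT.
Qed.

Lemma card_adj_cclasses v :
  #|[set D in cclasses e | qadj e (cclass e v) D]| <= alpha_star e ^ omega_tilde e.
Proof.
set P := [set D in _ | _].
have sP : P \subset cclasses e by apply/subsetP => D; rewrite inE => /andP [].
have [W injW imW] := cclass_transversal sP; rewrite -imW card_in_imset //.
have adjW : {in W, forall x, ~~ cequiv e v x && e v x}.
  by move=> x xW; rewrite -qadj_cclass; have := imset_f (cclass e) xW; rewrite imW inE => /andP [].
have [alpha_le1 | alpha_gt1] := leqP (alpha_star e) 1.
  suff -> : W = set0 by rewrite cards0.
  apply/setP => x; rewrite inE; apply/negP => xW.
  by case/andP: (adjW x xW) => /negP nvx /(adj_cequiv alpha_le1).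
have cliqueW (Q : {set T}) : Q \subset W -> clique e Q -> #|Q| < omega_tilde e.
  move=> sQW cQ; have adjQ := sub_in1 (subsetP sQW) adjW.
  have vQ : cclass e v \notin cclass e @: Q.
    by apply/imsetP => -[x xQ /eqP]; rewrite eq_cclass; case/andP: (adjQ x xQ) => /negP.
  have evQ : {in Q, forall x, e v x} by move=> x /adjQ /andP [].
  have := card_cclass_clique (cliqueU1 e_sym cQ evQ).
  by rewrite imsetU1 cardsU1 vQ card_in_imset //; apply: sub_in2 injW; apply/subsetP.
have stableW (I : {set T}) : I \subset W -> stable e I -> #|I| <= alpha_star e.
  move=> sIW; apply: (card_stable_cnbhd (v := v)).
  by apply/subsetP => x /(subsetP sIW) /adjW /andP [_ evx]; rewrite !inE evx orbT.
have omega_gt0 : 0 < omega_tilde e.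
  by have := cliqueW set0; rewrite sub0set cards0; apply => //; apply/cliqueP => x y; rewrite inE.
rewrite -(prednK omega_gt0); apply: leq_trans (bin_le_expn _ alpha_gt1).
by apply/ltnW/(ramsey_binomial e_sym e_irr) => // Q sQW cQ; rewrite -ltnS prednK // cliqueW.
Qed.

End CliqueQuotient.

Theorem lemma5p2 (T : finType) (e : rel T)
    (e_sym : symmetric e) (e_irr : irreflexive e) :
  Delta_tilde e <= alpha_star e ^ omega_tilde e.
Proof.
apply/bigmax_leqP => _ /imsetP [v _ ->].
exact: card_adj_cclasses.
Qed.
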